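(* Let $k:[1,\infty)\to(0,\infty)$ be a nonincreasing function such that $\int_1^\infty\frac{k(s)}{s}\,ds<\frac1{10}$. Let $x:[1,\infty)\to(0,\infty)$ be a differentiable function such that for all $t\ge1$, $$x(t)\le t\,x(1)\quad\text{and}\quad x'(t)\le\int_t^\infty x(s)\frac{k(s)}{s^2}\,ds.$$ Then there exists a constant $C>0$ depending only on $k$ such that $x(t)\le C\,x(1)$ for all $t\ge1$. *)

From Stdlib Require Import Reals.
From Coquelicot Require Import Coquelicot.
Open Scope R_scope.

Definition improper_int_from (f : R -> R) (a v : R) : Prop :=
  is_RInt_gen f (at_point a) (Rbar_locally p_infty) v.

Definition diff_on_1_infty (x x' : R -> R) : Prop :=
  (forall t, 1 < t -> is_derive x t (x' t)) /\
  filterlim (fun h => (x (1 + h) - x 1) / h) (at_right 0) (locally (x' 1)).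

From Stdlib Require Import Reals Lra.
From Coquelicot Require Import Coquelicot.
Open Scope R_scope.

(* Let Kprim t := \int_1^t k(s)/s ds, so 0 <= Kprim <= I < 1/10.  If x s <= x(1) (2 + eps s)
   on [1, +oo), the hypothesis on x' gives x'(t) <= x(1) (2 k(t)/t + eps I).  Since k(s)/s
   is nonincreasing, Kprim t - Kprim (t - h) >= h k(t)/t, so
   x t - x(1) (1 + 2 Kprim t + eps (t - 1) / 10) is nonincreasing and
   x t <= x(1) (2 + eps t / 10).  Starting from the linear bound (eps = 1) and iterating
   gives x t <= x(1) (2 + 10^-n t) for every n, hence C = 2.  Kprim need not be
   differentiable (k is merely monotone), so monotonicity is derived from one-sided
   conditions instead of the mean value theorem. *)

Lemma ball_Rabs (x e y : R) : ball x e y <-> Rabs (y - x) < e.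
Proof. reflexivity. Qed.

Lemma at_right_iff (s : R) (P : R -> Prop) :
  at_right s P <-> exists d, 0 < d /\ forall u, s < u < s + d -> P u.
Proof.
  split.
  - intros [d Hd]. exists d. split; [apply cond_pos|].
    intros u Hu. apply Hd; [apply (proj2 (ball_Rabs _ _ _)); rewrite Rabs_right|]; lra.
  - intros [d [Hd HP]]. exists (mkposreal d Hd). intros u Hu Hsu. apply HP.
    apply (proj1 (ball_Rabs _ _ _)) in Hu. rewrite Rabs_right in Hu; simpl in Hu; lra.
Qed.

Lemma at_left_iff (s : R) (P : R -> Prop) :
  at_left s P <-> exists d, 0 < d /\ forall u, s - d < u < s -> P u.
Proof.
  split.
  - intros [d Hd]. exists d. split; [apply cond_pos|].
    intros u Hu. apply Hd; [apply (proj2 (ball_Rabs _ _ _)); rewrite Rabs_left|]; lra.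
  - intros [d [Hd HP]]. exists (mkposreal d Hd). intros u Hu Hus. apply HP.
    apply (proj1 (ball_Rabs _ _ _)) in Hu. rewrite Rabs_left in Hu; simpl in Hu; lra.
Qed.

Lemma right_continuous_of_right_derive (f : R -> R) (a l : R) :
  filterlim (fun h => (f (a + h) - f a) / h) (at_right 0) (locally l) ->
  filterlim f (at_right a) (locally (f a)).
Proof.
  intros Hq P [e HP].
  destruct (proj1 (at_right_iff _ _) (Hq _ (locally_ball l (mkposreal 1 Rlt_0_1))))
    as [d [Hd Hdq]].
  set (L := Rabs l + 1).
  assert (HL : 0 < L) by (unfold L; generalize (Rabs_pos l); lra).
  apply at_right_iff. exists (Rmin d (e / L)). split.
  { apply Rmin_glb_lt; [lra | apply Rdiv_lt_0_compat; [apply cond_pos | lra]]. }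
  intros u Hu. apply HP, ball_Rabs.
  assert (Hud : u - a < d) by (generalize (Rmin_l d (e / L)); lra).
  assert (Hue : u - a < e / L) by (generalize (Rmin_r d (e / L)); lra).
  specialize (Hdq (u - a) ltac:(lra)).
  apply (proj1 (ball_Rabs _ _ _)) in Hdq. simpl in Hdq.
  replace (a + (u - a)) with u in Hdq by ring.
  set (q := (f u - f a) / (u - a)) in Hdq.
  assert (Hqa : Rabs q < L) by (unfold L; generalize (Rabs_triang_inv q l); lra).
  replace (f u - f a) with (q * (u - a)) by (unfold q; field; lra).
  rewrite Rabs_mult, (Rabs_right (u - a)) by lra.
  apply Rlt_le_trans with (L * (e / L)); [apply Rmult_gt_0_lt_compat; lra|].
  right; field; lra.
Qed.

Lemma left_lt_of_derive_lt (f h : R -> R) (s l c : R) :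
  is_derive f s l -> l < c ->
  at_left s (fun u => c * (s - u) <= h s - h u) ->
  at_left s (fun u => f s - h s < f u - h u).
Proof.
  intros Hf Hlc Hh.
  assert (Hslope : at_left s (fun u => f s - f u < c * (s - u))).
  { destruct (proj1 (is_derive_Reals f s l) Hf (c - l) ltac:(lra)) as [d Hd].
    apply at_left_iff. exists d. split; [apply cond_pos|]. intros u Hu.
    specialize (Hd (u - s) ltac:(lra) ltac:(rewrite Rabs_left; lra)).
    replace (s + (u - s)) with u in Hd by ring.
    apply Rabs_def2 in Hd. destruct Hd as [Hd _].
    assert (Hq : (f u - f s) / (u - s) * (u - s) = f u - f s) by (field; lra).
    nra. }
  apply (filter_imp (fun u => f s - f u < c * (s - u) /\ c * (s - u) <= h s - h u)).
  - intros u [H1 H2]. lra.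
  - apply filter_and; assumption.
Qed.

(* With s the supremum of {t | g t < g b}: right upper semicontinuity rules out
   g s < g b, and the strict decrease from the left rules out g s >= g b. *)
Lemma le_of_right_usc_left_decr (g : R -> R) (a b : R) : a <= b ->
  (forall s, a <= s < b -> forall e, 0 < e -> at_right s (fun u => g u < g s + e)) ->
  (forall s, a < s <= b -> at_left s (fun u => g s < g u)) ->
  g b <= g a.
Proof.
  intros Hab Husc Hdecr. apply Rnot_lt_le; intro Hlt.
  set (D := fun t => a <= t <= b /\ g t < g b).
  assert (HDb : bound D) by (exists b; intros t [Ht _]; lra).
  assert (HDa : D a) by (split; lra).
  destruct (completeness D HDb (ex_intro _ a HDa)) as [s [Hub Hlub]].
  assert (Has : a <= s) by (apply Hub, HDa).
  assert (Hsb : s <= b) by (apply Hlub; intros t [Ht _]; lra).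
  destruct (Rlt_or_le (g s) (g b)) as [Hgs | Hgs].
  - assert (Hsb' : s < b) by (destruct Hsb as [| ->]; lra).
    destruct (proj1 (at_right_iff _ _) (Husc s (conj Has Hsb') (g b - g s) ltac:(lra)))
      as [d [Hd Hu]].
    set (u := Rmin (s + d / 2) b).
    assert (Hsu : s < u) by (unfold u; apply Rmin_glb_lt; lra).
    assert (Hub' : u <= b) by apply Rmin_r.
    assert (Hud : u <= s + d / 2) by apply Rmin_l.
    assert (Du : D u) by (split; [lra | specialize (Hu u ltac:(lra)); lra]).
    specialize (Hub u Du). lra.
  - assert (Has' : a < s) by (destruct Has as [| <-]; lra).
    destruct (proj1 (at_left_iff _ _) (Hdecr s (conj Has' Hsb))) as [d [Hd Hu]].
    assert (s <= s - d / 2); [|lra].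
    apply Hlub. intros t [Ht Hgt].
    destruct (Rle_or_lt t (s - d / 2)) as [|Hts]; [assumption|].
    assert (Hts' : t < s) by (destruct (Hub t (conj Ht Hgt)) as [| ->]; lra).
    specialize (Hu t ltac:(lra)). lra.
Qed.

Lemma le_of_forall_geom (q a b c : R) : Rabs q < 1 ->
  (forall n, a <= b + c * q ^ n) -> a <= b.
Proof.
  intros Hq Habc.
  assert (Hlim : is_lim_seq (fun n => b + c * q ^ n) (b + c * 0)).
  { apply (is_lim_seq_plus' _ _ b (c * 0)); [apply is_lim_seq_const|].
    exact (is_lim_seq_scal_l _ c 0 (is_lim_seq_geom q Hq)). }
  rewrite Rmult_0_r, Rplus_0_r in Hlim.
  exact (is_lim_seq_le (fun _ => a) _ a b Habc (is_lim_seq_const a) Hlim).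
Qed.

Lemma improper_int_from_ex_RInt (f : R -> R) (a b J : R) :
  improper_int_from f a J -> a <= b -> ex_RInt f a b.
Proof.
  intros HJ Hab.
  destruct (HJ (fun _ => True) filter_true) as [Q R HQ [M HR] Himp].
  set (c := Rmax M b + 1).
  destruct (Himp a c HQ (HR c ltac:(unfold c; generalize (Rmax_l M b); lra))) as [y [Hy _]].
  apply (ex_RInt_Chasles_1 f a b c); [unfold c; generalize (Rmax_r M b); lra|].
  exists y. exact Hy.
Qed.

Lemma improper_int_from_tail (f : R -> R) (a b J l : R) :
  improper_int_from f a J -> is_RInt f a b l -> improper_int_from f b (J - l).
Proof.
  intros HJ Hl.
  assert (Hba : is_RInt_gen f (at_point b) (at_point a) (opp l))
    by apply is_RInt_gen_at_point, (is_RInt_swap f b a l), Hl.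
  assert (H := is_RInt_gen_Chasles f a _ _ Hba HJ).
  replace (J - l) with (plus (opp l) J) by (unfold plus, opp; simpl; ring).
  exact H.
Qed.

Lemma improper_int_from_lim (f F : R -> R) (a l : R) :
  (forall b, a <= b -> is_RInt f a b (F b)) ->
  filterlim F (Rbar_locally p_infty) (locally l) -> improper_int_from f a l.
Proof.
  intros HF Hl P HP.
  apply Filter_prod with (fun u => u = a) (fun b => a <= b /\ P (F b)).
  - reflexivity.
  - apply filter_and; [exists a; intros; lra | exact (Hl P HP)].
  - intros u b -> [Hab HPb]. exists (F b). split; [apply HF|]; assumption.
Qed.

Lemma improper_int_from_abs_le (f g : R -> R) (a Jf Jg : R) :
  (forall s, a <= s -> Rabs (f s) <= g s) ->
  improper_int_from f a Jf -> improper_int_from g a Jg -> Rabs Jf <= Jg.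
Proof.
  intros Hfg. apply (RInt_gen_norm f g).
  - apply Filter_prod with (fun u => u = a) (fun b => a <= b);
      [reflexivity | exists a; intros; lra | intros u b -> Hb; exact Hb].
  - apply Filter_prod with (fun u => u = a) (fun _ => True);
      [reflexivity | apply filter_true | intros u b -> _ s Hs; apply Hfg, Hs].
Qed.

Lemma improper_int_inv_sq (t : R) : 0 < t -> improper_int_from (fun s => / s ^ 2) t (/ t).
Proof.
  intros Ht. apply improper_int_from_lim with (F := fun b => / t - / b).
  - intros b Hb.
    assert (H := is_RInt_derive (fun s => - / s) (fun s => / s ^ 2) t b).
    rewrite Rmin_left, Rmax_right in H by lra.
    replace (/ t - / b) with (minus (- / b) (- / t)) by (unfold minus, plus, opp; simpl; ring).
    apply H; intros s Hs.
    + auto_derive; [lra | field; lra].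
    + apply (@ex_derive_continuous R_AbsRing R_NormedModule). auto_derive. nra.
  - assert (Hinv : is_lim (fun b => / b) p_infty 0)
      by exact (is_lim_inv (fun b => b) p_infty p_infty (is_lim_id _) ltac:(discriminate)).
    assert (H := is_lim_minus' _ _ _ _ _ (is_lim_const (/ t) p_infty) Hinv).
    rewrite Rminus_0_r in H. exact H.
Qed.

Lemma diff_on_1_infty_right_continuous (x x' : R -> R) (s : R) :
  diff_on_1_infty x x' -> 1 <= s -> filterlim x (at_right s) (locally (x s)).
Proof.
  intros [Hder H1] [Hs | <-].
  - apply (filterlim_filter_le_1 _ (filter_le_within _)).
    apply (@ex_derive_continuous R_AbsRing R_NormedModule). exists (x' s). apply Hder, Hs.
  - exact (right_continuous_of_right_derive x 1 (x' 1) H1).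
Qed.

Section Kernel.

Variable k : R -> R.
Hypothesis k_pos : forall s, 1 <= s -> 0 < k s.
Hypothesis k_noninc : forall s u, 1 <= s -> s <= u -> k u <= k s.
Variable I : R.
Hypothesis k_int : improper_int_from (fun s => k s / s) 1 I.

Definition Kprim (t : R) : R := RInt (fun s => k s / s) 1 t.

Lemma is_RInt_Kprim (a b : R) : 1 <= a -> 1 <= b ->
  is_RInt (fun s => k s / s) a b (Kprim b - Kprim a).
Proof.
  intros Ha Hb.
  assert (H1a := RInt_correct _ _ _ (improper_int_from_ex_RInt _ 1 a _ k_int Ha)).
  assert (H1b := RInt_correct _ _ _ (improper_int_from_ex_RInt _ 1 b _ k_int Hb)).
  assert (H := is_RInt_Chasles _ _ _ _ _ _ (is_RInt_swap _ _ _ _ H1a) H1b).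
  unfold Kprim. replace (RInt _ 1 b - RInt _ 1 a)
    with (plus (opp (RInt (fun s => k s / s) 1 a)) (RInt (fun s => k s / s) 1 b))
    by (unfold plus, opp; simpl; ring).
  exact H.
Qed.

Lemma Kprim_increment_ge (u s : R) : 1 <= u <= s ->
  (s - u) * (k s / s) <= Kprim s - Kprim u.
Proof.
  intros Hus.
  apply (is_RInt_le (fun _ => k s / s) (fun s => k s / s) u s);
    [lra | exact (@is_RInt_const R_NormedModule u s (k s / s)) | |].
  - apply is_RInt_Kprim; lra.
  - intros v Hv. unfold Rdiv. apply Rmult_le_compat.
    + generalize (k_pos s ltac:(lra)); lra.
    + left; apply Rinv_0_lt_compat; lra.
    + apply k_noninc; lra.
    + apply Rinv_le_contravar; lra.
Qed.

Lemma Kprim_le (u s : R) : 1 <= u <= s -> Kprim u <= Kprim s.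
Proof.
  intros Hus. assert (H := Kprim_increment_ge u s Hus).
  assert (0 <= (s - u) * (k s / s)).
  { apply Rmult_le_pos; [lra|]. left; apply Rdiv_lt_0_compat; [apply k_pos|]; lra. }
  lra.
Qed.

Lemma Kprim_1 : Kprim 1 = 0.
Proof. unfold Kprim. rewrite RInt_point. reflexivity. Qed.

Lemma Kprim_le_int (t : R) : 1 <= t -> Kprim t <= I.
Proof.
  intros Ht.
  assert (Htail := improper_int_from_tail _ _ _ _ _ k_int (is_RInt_Kprim 1 t (Rle_refl 1) Ht)).
  rewrite Kprim_1, Rminus_0_r in Htail.
  assert (Hnn : Rabs (I - Kprim t) <= I - Kprim t).
  { apply (improper_int_from_abs_le (fun s => k s / s) (fun s => k s / s) t); [|exact Htail..].
    intros s Hs. rewrite Rabs_right; [lra|].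
    left; apply Rdiv_lt_0_compat; [apply k_pos|]; lra. }
  generalize (Rle_abs (Kprim t - I)). rewrite Rabs_minus_sym. lra.
Qed.

Section Bootstrap.

Variables x x' : R -> R.
Hypothesis x_pos : forall t, 1 <= t -> 0 < x t.
Hypothesis x_diff : diff_on_1_infty x x'.
Hypothesis x'_le_tail : forall t, 1 <= t -> exists J,
  improper_int_from (fun s => x s * k s / s ^ 2) t J /\ x' t <= J.
Variable eps : R.
Hypothesis eps_pos : 0 < eps.
Hypothesis x_le : forall s, 1 <= s -> x s <= x 1 * (2 + eps * s).
Hypothesis int_small : I < 1 / 10.

Lemma x'_le_kernel (t : R) : 1 <= t -> x' t <= x 1 * (2 * (k t / t) + eps * I).
Proof.
  intros Ht. destruct (x'_le_tail t Ht) as [J [HJ HxJ]].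
  assert (Hx1 : 0 < x 1) by (apply x_pos; lra).
  assert (Hmaj : improper_int_from (fun s => x 1 * (2 * k t * / s ^ 2 + eps * (k s / s))) t
                   (x 1 * (2 * k t * / t + eps * (I - Kprim t)))).
  { assert (Htail := improper_int_from_tail _ _ _ _ _ k_int (is_RInt_Kprim 1 t (Rle_refl 1) Ht)).
    rewrite Kprim_1, Rminus_0_r in Htail.
    assert (Hinv := improper_int_inv_sq t ltac:(lra)).
    exact (is_RInt_gen_scal _ (x 1) _ (is_RInt_gen_plus _ _ _ _
             (is_RInt_gen_scal _ (2 * k t) _ Hinv)
             (is_RInt_gen_scal _ eps _ Htail))). }
  assert (HJle : J <= x 1 * (2 * k t * / t + eps * (I - Kprim t))).
  { apply Rle_trans with (Rabs J); [apply Rle_abs|].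
    refine (improper_int_from_abs_le _ _ t _ _ _ HJ Hmaj).
    intros s Hs; cbv beta.
    assert (Hks := k_pos s ltac:(lra)). assert (Hkst := k_noninc t s Ht Hs).
    assert (Hs2 : 0 < / s ^ 2) by (apply Rinv_0_lt_compat, pow_lt; lra).
    rewrite Rabs_right.
    2: { left. unfold Rdiv. repeat apply Rmult_lt_0_compat; try apply x_pos; lra. }
    apply Rle_trans with (x 1 * (2 + eps * s) * k s * / s ^ 2).
    { unfold Rdiv. apply Rmult_le_compat_r; [lra|].
      apply Rmult_le_compat_r; [lra|]. apply x_le; lra. }
    replace (x 1 * (2 + eps * s) * k s * / s ^ 2)
      with (x 1 * (2 * k s * / s ^ 2 + eps * (k s / s))) by (field; lra).
    apply Rmult_le_compat_l; [lra|]. nra. }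
  assert (HK := Kprim_le 1 t ltac:(lra)). rewrite Kprim_1 in HK.
  assert (eps * (I - Kprim t) <= eps * I) by (apply Rmult_le_compat_l; lra).
  assert (x 1 * (2 * k t * / t + eps * (I - Kprim t)) <= x 1 * (2 * (k t / t) + eps * I)).
  { apply Rmult_le_compat_l; [lra|]. unfold Rdiv. lra. }
  lra.
Qed.

Lemma bootstrap_step (T : R) : 1 <= T -> x T <= x 1 * (2 + eps / 10 * T).
Proof.
  intros HT.
  assert (Hx1 : 0 < x 1) by (apply x_pos; lra).
  set (h := fun t => x 1 * (1 + 2 * Kprim t + eps / 10 * (t - 1))).
  assert (Hdecr : x T - h T <= x 1 - h 1).
  { apply (le_of_right_usc_left_decr (fun t => x t - h t)); [exact HT | |].
    - intros s [Hs _] e He.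
      assert (Hx := diff_on_1_infty_right_continuous x x' s x_diff Hs _
                      (locally_ball (x s) (mkposreal e He))).
      destruct (proj1 (at_right_iff _ _) Hx) as [d [Hd Hxd]].
      apply at_right_iff. exists d. split; [exact Hd|]. intros u Hu.
      specialize (Hxd u Hu). apply (proj1 (ball_Rabs _ _ _)), Rabs_def2 in Hxd.
      assert (Kprim s <= Kprim u) by (apply Kprim_le; lra).
      assert (h s <= h u) by (unfold h; apply Rmult_le_compat_l; nra).
      simpl in Hxd. lra.
    - intros s [Hs _].
      apply (left_lt_of_derive_lt x h s (x' s) (x 1 * (2 * (k s / s) + eps / 10))).
      + apply (proj1 x_diff). lra.
      + apply Rle_lt_trans with (x 1 * (2 * (k s / s) + eps * I)); [apply x'_le_kernel; lra|].
        apply Rmult_lt_compat_l; [lra|]. apply Rplus_lt_compat_l, Rmult_lt_compat_l; lra.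
      + apply at_left_iff. exists (s - 1). split; [lra|]. intros u Hu.
        assert (HK := Kprim_increment_ge u s ltac:(lra)).
        unfold h. nra. }
  assert (HKT := Kprim_le_int T HT).
  unfold h in Hdecr. rewrite Kprim_1 in Hdecr.
  assert (x 1 * (1 + 2 * Kprim T + eps / 10 * (T - 1)) <= x 1 * (2 + eps / 10 * T)).
  { apply Rmult_le_compat_l; lra. }
  lra.
Qed.

End Bootstrap.

End Kernel.

Theorem lemma4p12 (k : R -> R)
  (k_pos : forall s, 1 <= s -> 0 < k s)
  (k_noninc : forall s u, 1 <= s -> s <= u -> k u <= k s)
  (k_int : exists I, improper_int_from (fun s => k s / s) 1 I /\ I < 1 / 10) :
  exists C, 0 < C /\
    forall (x x' : R -> R),
      (forall t, 1 <= t -> 0 < x t) ->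
      diff_on_1_infty x x' ->
      (forall t, 1 <= t -> x t <= t * x 1) ->
      (forall t, 1 <= t -> exists J,
          improper_int_from (fun s => x s * k s / s ^ 2) t J /\ x' t <= J) ->
      forall t, 1 <= t -> x t <= C * x 1.
Proof.
  destruct k_int as [I [k_int_I I_small]]. exists 2. split; [lra|].
  intros x x' x_pos x_diff x_lin x'_le_tail t Ht.
  assert (Hx1 : 0 < x 1) by (apply x_pos; lra).
  assert (Hgeom : forall n s, 1 <= s -> x s <= x 1 * (2 + (/ 10) ^ n * s)).
  { induction n as [|n IH]; intros s Hs.
    - generalize (x_lin s Hs). simpl. lra.
    - replace ((/ 10) ^ S n) with ((/ 10) ^ n / 10) by (simpl; field).
      apply (bootstrap_step k k_pos k_noninc I k_int_I x x' x_pos x_diff x'_le_tail);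
        [apply pow_lt; lra | exact IH | exact I_small | exact Hs]. }
  apply (le_of_forall_geom (/ 10) _ _ (x 1 * t)); [rewrite Rabs_right; lra|].
  intros n.
  replace (2 * x 1 + x 1 * t * (/ 10) ^ n) with (x 1 * (2 + (/ 10) ^ n * t)) by ring.
  apply Hgeom, Ht.
Qed.
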